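(* Let $\Gamma=\langle x,y,z\mid x^2=y^2=z^2=e,\ xy^{-1}=yx^{-1},\ xz^{-1}=zx^{-1},\ yz^{-1}=zy^{-1}\rangle$ (so that $\Gamma\cong(\mathbb{Z}/2)^3$ and $C_\Delta(\Gamma)$ is the hypercube of dimension 3), with $\Delta=\{x,y,z\}$. There is no homogeneous scalar quantum walk on $C_\Delta(\Gamma)$.
   Context: The Cayley graph $C_\Delta(\Gamma)$ has vertex set $\Gamma$ and directed edges $(g,g\delta)$, $g\in\Gamma,\delta\in\Delta$. Let $\ell^2(\Gamma)$ have orthonormal basis $\{|g\rangle\}_{g\in\Gamma}$ and for $\delta\in\Gamma$ let $U_\delta|g\rangle=|g\delta\rangle$. A homogeneous scalar quantum walk on $C_\Delta(\Gamma)$ is a unitary operator $W=\sum_{\delta\in\Delta}W_\delta U_\delta$ with all complex coefficients $W_\delta$ nonzero. *)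

From HB Require Import structures.
From mathcomp Require Import all_boot all_order all_algebra.
From mathcomp Require Import complex reals.
Set Implicit Arguments. Unset Strict Implicit. Unset Printing Implicit Defensive.
Import Order.TTheory GRing.Theory Num.Theory.
Local Open Scope ring_scope.

(* Gamma = (Z/2)^3, elements as bool triples, group law = componentwise xor.
   This is the group <x,y,z | x^2=y^2=z^2=e, xy^-1=yx^-1, ...>. *)
Definition Gam := (bool * bool * bool)%type.
Definition gmul (g h : Gam) : Gam :=
  let: (a1, a2, a3) := g in let: (b1, b2, b3) := h in
  (xorb a1 b1, xorb a2 b2, xorb a3 b3).

Definition gen (i : 'I_3) : Gam :=
  if val i == 0%N then (true, false, false)
  else if val i == 1%N then (false, true, false)
  else (false, false, true).

(* Operators on l^2(Gam) (finite-dimensional), as kernels: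
   op h g = <h| A |g>. *)
Definition op (C : Type) := Gam -> Gam -> C.

(* U_delta |g> = |g delta>, i.e. <h|U_delta|g> = [h == g delta]. *)
Definition shiftU (C : nzRingType) (d : Gam) : op C :=
  fun h g => (h == gmul g d)%:R.

Definition op_comp (C : nzRingType) (A B : op C) : op C :=
  fun h g => \sum_(k : Gam) A h k * B k g.

Definition op_adj (C : numClosedFieldType) (A : op C) : op C :=
  fun h g => (A g h)^*.

Definition op_id (C : nzRingType) : op C := fun h g => (h == g)%:R.

Definition unitary (C : numClosedFieldType) (A : op C) : Prop :=
  op_comp (op_adj A) A = op_id C /\ op_comp A (op_adj A) = op_id C.

Definition walk (C : nzRingType) (w : 'I_3 -> C) : op C :=
  fun h g => \sum_(i < 3) w i * shiftU C (gen i) h g.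

Definition homogeneous_scalar_QW (R : realType) (w : 'I_3 -> R[i]) : Prop :=
  unitary (walk w) /\ (forall i, w i != 0).

(* Expanding W^* W = \sum_(i, j) (w_i)^* w_j U_(x_i)^-1 U_(x_j), the terms for
   a pair i <> j land on the same entry as the term for (j, i) and on no
   other, since x_i x_j = x_k x_l in (Z/2)^3 forces {k, l} = {i, j}.
   Unitarity therefore makes the nonzero coefficients w_x, w_y, w_z pairwise
   orthogonal, (w_i)^* w_j + (w_j)^* w_i = 0, as vectors of the real plane C,
   and the plane has no three such vectors. *)

From mathcomp Require Import all_boot all_order all_algebra.
From mathcomp Require Import complex reals ring.
Set Implicit Arguments. Unset Strict Implicit. Unset Printing Implicit Defensive.
Import GRing.Theory Num.Theory.
Local Open Scope ring_scope.

(* With b = t a and c = s a, the first two equations say t^* = -t and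
   s^* = -s, and then the third one reads -2 |a|^2 t s = 0. *)
Lemma orthogonal_triple_eq0 (C : numClosedFieldType) (a b c : C) :
  a^* * b + b^* * a = 0 -> a^* * c + c^* * a = 0 -> b^* * c + c^* * b = 0 ->
  [|| a == 0, b == 0 | c == 0].
Proof.
have [-> //|a_neq0] := eqVneq a 0.
have aa_neq0 : a^* * a != 0 by rewrite mulf_neq0 ?conjC_eq0.
have ratioE x : x = x / a * a by rewrite divfK.
rewrite (ratioE b) (ratioE c); move: (b / a) (c / a) => t s.
rewrite !rmorphM /= !mulf_eq0 (negPf a_neq0) !orbF.
have imag u : a^* * (u * a) + u^* * a^* * a = 0 -> u^* = - u.
  move=> h; have : a^* * a * (u^* + u) = 0 by rewrite -h; ring.
  by move/eqP; rewrite mulf_eq0 (negPf aa_neq0) addr_eq0 => /eqP.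
move=> /imag tN /imag sN; rewrite tN sN => hts.
have : a^* * a * (t * s) *+ 2 = 0 by rewrite -[RHS]oppr0 -hts; ring.
by move/eqP; rewrite -mulr_natr mulf_eq0 pnatr_eq0 orbF mulf_eq0 (negPf aa_neq0) mulf_eq0.
Qed.

Lemma sum_mul_eq_indicator (R : pzSemiRingType) (I : finType) (G : I -> R) (j : I) :
  \sum_i G i * (i == j)%:R = G j.
Proof.
rewrite (bigD1 j) //= eqxx mulr1 big1 ?addr0 // => i /negPf->.
by rewrite mulr0.
Qed.

Lemma sum_mul_indicator_swap (R : pzSemiRingType) (I : finType) (F : I -> I -> R)
    (i j : I) : i != j ->
  \sum_k \sum_l F k l * (((k == i) && (l == j)) || ((k == j) && (l == i)))%:R =
  F i j + F j i.
Proof.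
move=> ij; rewrite (bigD1 i) // (bigD1 j) 1?eq_sym //=.
rewrite !eqxx [j == i]eq_sym (negPf ij) /=.
under eq_bigr do rewrite orbF.
rewrite !sum_mul_eq_indicator.
rewrite big1 ?addr0 // => k /andP[ki kj].
by rewrite (negPf ki) (negPf kj) big1 // => l _; rewrite mulr0.
Qed.

Lemma walk_adj_walkE (C : numClosedFieldType) (w : 'I_3 -> C) (h g : Gam) :
  op_comp (op_adj (walk w)) (walk w) h g =
  \sum_(i < 3) \sum_(j < 3) (w i)^* * w j * (gmul h (gen i) == gmul g (gen j))%:R.
Proof.
rewrite /op_comp /op_adj /walk /shiftU.
under eq_bigr => k _ do rewrite rmorph_sum big_distrl /=.
rewrite exchange_big; apply: eq_bigr => i _.
under eq_bigr => k _ do rewrite big_distrr /=.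
rewrite exchange_big; apply: eq_bigr => j _.
under eq_bigr => k _ do rewrite rmorphM /= conjC_nat mulrACA.
by rewrite -big_distrr /= sum_mul_eq_indicator eq_sym.
Qed.

Lemma eq_gen (i j : 'I_3) : (gen i == gen j) = (i == j).
Proof. by move: i j; do 2!case=> [[|[|[|//]]] ?]. Qed.

Lemma eq_gen_mul (i j k l : 'I_3) : i != j ->
  (gmul (gen i) (gen k) == gmul (gen j) (gen l)) =
  ((k == i) && (l == j)) || ((k == j) && (l == i)).
Proof. by move: i j k l; do 4!case=> [[|[|[|//]]] ?]. Qed.

Lemma walk_isometry_orthogonal (C : numClosedFieldType) (w : 'I_3 -> C) (i j : 'I_3) :
  op_comp (op_adj (walk w)) (walk w) = op_id C -> i != j ->
  (w i)^* * w j + (w j)^* * w i = 0.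
Proof.
move=> isoW ij; have := congr1 (fun A => A (gen i) (gen j)) isoW.
rewrite walk_adj_walkE /op_id eq_gen (negPf ij).
under eq_bigr => k _ do under eq_bigr => l _ do rewrite eq_gen_mul //.
by rewrite sum_mul_indicator_swap.
Qed.

Theorem mainTheorem7 (R : realType) :
  ~ exists w : 'I_3 -> R[i], homogeneous_scalar_QW w.
Proof.
move=> [w [[/walk_isometry_orthogonal orth _] w_neq0]].
have := orthogonal_triple_eq0 (orth 0 1 isT) (orth 0 2 isT) (orth 1 2 isT).
by rewrite !(negPf (w_neq0 _)).
Qed.
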